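(* For every finite multiset $\Gamma$ of ILL formulae and every ILL formula $\varphi$: $\Gamma\vdash\varphi$ (derivability in $\mathrm{N_{ILL}}$) holds if and only if $\Gamma\vdash^*\varphi$.
   Context: Fix a set $\mathbb{A}$ of propositional atoms. ILL formulae: $\phi ::= p\in\mathbb{A} \mid \top \mid 0 \mid 1 \mid \phi\multimap\phi \mid \phi\otimes\phi \mid \phi\,\&\,\phi \mid \phi\oplus\phi \mid\ !\phi$. All multisets are finite; ''$\Gamma,\Delta$'' is multiset union. Natural deduction $\mathrm{N_{ILL}}$: $\Gamma\vdash\varphi$ is defined inductively by: (Ax) $\varphi\vdash\varphi$; ($\multimap$I) from $\Gamma,\phi\vdash\psi$ infer $\Gamma\vdash\phi\multimap\psi$; ($\multimap$E) from $\Gamma\vdash\phi\multimap\psi$ and $\Delta\vdash\phi$ infer $\Gamma,\Delta\vdash\psi$; ($\otimes$I) from $\Gamma\vdash\phi$, $\Delta\vdash\psi$ infer $\Gamma,\Delta\vdash\phi\otimes\psi$; ($\otimes$E) from $\Gamma\vdash\phi\otimes\psi$ and $\Delta,\phi,\psi\vdash\chi$ infer $\Gamma,\Delta\vdash\chi$; ($1$I) $\vdash 1$; ($1$E) from $\Gamma\vdash 1$, $\Delta\vdash\phi$ infer $\Gamma,\Delta\vdash\phi$; ($\&$I) from $\Gamma\vdash\phi$, $\Gamma\vdash\psi$ infer $\Gamma\vdash\phi\&\psi$; ($\&$E) from $\Gamma\vdash\phi\&\psi$ infer $\Gamma\vdash\phi$ and infer $\Gamma\vdash\psi$; ($\oplus$I)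 from $\Gamma\vdash\phi$ (or $\Gamma\vdash\psi$) infer $\Gamma\vdash\phi\oplus\psi$; ($\oplus$E) from $\Gamma\vdash\phi\oplus\psi$, $\Delta,\phi\vdash\chi$, $\Delta,\psi\vdash\chi$ infer $\Gamma,\Delta\vdash\chi$; ($\top$I) for $n\ge0$, from $\Gamma_i\vdash\phi_i$ ($i=1..n$) infer $\Gamma_1,\dots,\Gamma_n\vdash\top$; ($0$E) for $n\ge 0$, from $\Gamma_i\vdash\phi_i$ ($i=1..n$) and $\Delta\vdash 0$ infer $\Gamma_1,\dots,\Gamma_n,\Delta\vdash\chi$; (Prom$_n$) for $n\ge0$, from $\Gamma_i\vdash\,!\psi_i$ ($i=1..n$) and $!\psi_1,\dots,!\psi_n\vdash\phi$ infer $\Gamma_1,\dots,\Gamma_n\vdash\,!\phi$; (Der) from $\Gamma\vdash\,!\phi$, $\Delta,\phi\vdash\psi$ infer $\Gamma,\Delta\vdash\psi$; (Wk) from $\Gamma\vdash\,!\phi$, $\Delta\vdash\psi$ infer $\Gamma,\Delta\vdash\psi$; (Ctr) from $\Gamma\vdash\,!\phi$, $\Delta,!\phi,!\phi\vdash\psi$ infer $\Gamma,\Delta\vdash\psi$. Inference schemas: a sequent is $\Psi\Rightarrow\psi$ ($\Psi$ a multiset of formulae); a box is a multiset of sequents; a schema is $\langle\mathbf{A},\mathbf{S},\varphi\rangle$ with $\mathbf{A}$ a multiset of boxes, $\mathbf{S}$ a multiset of sequents, $\varphi$ a formula. The set $\mathfrak{N}$ consists of all instances (for all formulae $\varphi,\psi,\chi,\varphi_i$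 and all $n\ge0$) of: $\langle[\{\varphi\Rightarrow\psi\}],\varnothing,\varphi\multimap\psi\rangle$; $\langle[\{\Rightarrow\varphi\multimap\psi\},\{\Rightarrow\varphi\}],\varnothing,\psi\rangle$; $\langle[\{\Rightarrow\varphi\},\{\Rightarrow\psi\}],\varnothing,\varphi\otimes\psi\rangle$; $\langle[\{\Rightarrow\varphi\otimes\psi\},\{\varphi,\psi\Rightarrow\chi\}],\varnothing,\chi\rangle$; $\langle\varnothing,\varnothing,1\rangle$; $\langle[\{\Rightarrow1\},\{\Rightarrow\chi\}],\varnothing,\chi\rangle$; $\langle[\{\Rightarrow\varphi,\ \Rightarrow\psi\}],\varnothing,\varphi\&\psi\rangle$; $\langle[\{\Rightarrow\varphi\&\psi\}],\varnothing,\varphi\rangle$; $\langle[\{\Rightarrow\varphi\&\psi\}],\varnothing,\psi\rangle$; $\langle[\{\Rightarrow\varphi\}],\varnothing,\varphi\oplus\psi\rangle$; $\langle[\{\Rightarrow\psi\}],\varnothing,\varphi\oplus\psi\rangle$; $\langle[\{\Rightarrow\varphi\oplus\psi\},\{\varphi\Rightarrow\chi,\ \psi\Rightarrow\chi\}],\varnothing,\chi\rangle$; $\langle[\{\Rightarrow\varphi_1\},\dots,\{\Rightarrow\varphi_n\}],\varnothing,\top\rangle$; $\langle[\{\Rightarrow\varphi_1\},\dots,\{\Rightarrow\varphi_n\},\{\Rightarrow0\}],\varnothing,\chi\rangle$; $\langle\varnothing,[\Rightarrow\varphi],!\varphi\rangle$; $\langle[\{\Rightarrow!\varphi\},\{\varphi\Rightarrow\psi\}],\varnothing,\psi\rangle$;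 $\langle[\{\Rightarrow!\varphi\},\{\Rightarrow\psi\}],\varnothing,\psi\rangle$; $\langle[\{\Rightarrow!\varphi\},\{!\varphi,!\varphi\Rightarrow\psi\}],\varnothing,\psi\rangle$. $\vdash^*$ is defined inductively: (Ref) $\varphi\vdash^*\varphi$; (App) if $\langle\mathbf{A},\mathbf{S},\varphi\rangle\in\mathfrak{N}$ with $\mathbf{A}=\{\mathbf{T}_1,\dots,\mathbf{T}_m\}$, and there are multisets of formulae $\Gamma_1,\dots,\Gamma_n$ ($n\ge m$) and formulae $\delta_{m+1},\dots,\delta_n$ such that $\Gamma_i,\Psi\vdash^*\psi$ for every $i\le m$ and every $\Psi\Rightarrow\psi\in\mathbf{T}_i$, $\Gamma_j\vdash^*!\delta_j$ for every $m<j\le n$, and $!\delta_{m+1},\dots,!\delta_n,\Theta\vdash^*\theta$ for every $\Theta\Rightarrow\theta\in\mathbf{S}$, then $\Gamma_1,\dots,\Gamma_n\vdash^*\varphi$. *)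

(* Multisets of formulae are represented by lists taken up to
   Permutation: every rule's conclusion context is any permutation of the
   multiset union (list concatenation) of the premise contexts. *)
From Stdlib Require Import List Permutation.
Import ListNotations.
Set Implicit Arguments.

Section ILL.
Variable atom : Type.

Inductive form : Type :=
| Atom : atom -> form
| Top : form
| Zero : form
| One : form
| Lolli : form -> form -> form
| Tensor : form -> form -> form
| With : form -> form -> form
| Plus : form -> form -> form
| Bang : form -> form.

Inductive nd : list form -> form -> Prop :=
| nd_ax : forall phi, nd [phi] phi
| nd_lolliI : forall G phi psi, nd (phi :: G) psi -> nd G (Lolli phi psi)
| nd_lolliE : forall G D S phi psi,
    nd G (Lolli phi psi) -> nd D phi -> Permutation S (G ++ D) -> nd S psi
| nd_tensorI : forall G D S phi psi,
    nd G phi -> nd D psi -> Permutation S (G ++ D) -> nd S (Tensor phi psi)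
| nd_tensorE : forall G D S phi psi chi,
    nd G (Tensor phi psi) -> nd (phi :: psi :: D) chi ->
    Permutation S (G ++ D) -> nd S chi
| nd_oneI : nd [] One
| nd_oneE : forall G D S phi,
    nd G One -> nd D phi -> Permutation S (G ++ D) -> nd S phi
| nd_withI : forall G phi psi, nd G phi -> nd G psi -> nd G (With phi psi)
| nd_withE1 : forall G phi psi, nd G (With phi psi) -> nd G phi
| nd_withE2 : forall G phi psi, nd G (With phi psi) -> nd G psi
| nd_plusI1 : forall G phi psi, nd G phi -> nd G (Plus phi psi)
| nd_plusI2 : forall G phi psi, nd G psi -> nd G (Plus phi psi)
| nd_plusE : forall G D S phi psi chi,
    nd G (Plus phi psi) -> nd (phi :: D) chi -> nd (psi :: D) chi ->
    Permutation S (G ++ D) -> nd S chi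
| nd_topI : forall (prems : list (list form * form)) S,
    (forall p, In p prems -> nd (fst p) (snd p)) ->
    Permutation S (concat (map fst prems)) -> nd S Top
| nd_zeroE : forall (prems : list (list form * form)) D S chi,
    (forall p, In p prems -> nd (fst p) (snd p)) ->
    nd D Zero ->
    Permutation S (concat (map fst prems) ++ D) -> nd S chi
| nd_prom : forall (prems : list (list form * form)) S phi,
    (forall p, In p prems -> nd (fst p) (Bang (snd p))) ->
    nd (map (fun p => Bang (snd p)) prems) phi ->
    Permutation S (concat (map fst prems)) -> nd S (Bang phi)
| nd_der : forall G D S phi psi,
    nd G (Bang phi) -> nd (phi :: D) psi -> Permutation S (G ++ D) -> nd S psi
| nd_wk : forall G D S phi psi,
    nd G (Bang phi) -> nd D psi -> Permutation S (G ++ D) -> nd S psi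
| nd_ctr : forall G D S phi psi,
    nd G (Bang phi) -> nd (Bang phi :: Bang phi :: D) psi ->
    Permutation S (G ++ D) -> nd S psi.

Definition sequent : Type := (list form * form)%type.
Definition box : Type := list sequent.
Definition schema : Type := (list box * list sequent * form)%type.

Definition nullary (phi : form) : sequent := ([], phi).

Inductive inN : schema -> Prop :=
| N_lolliI : forall phi psi, inN ([[([phi], psi)]], [], Lolli phi psi)
| N_lolliE : forall phi psi,
    inN ([[nullary (Lolli phi psi)]; [nullary phi]], [], psi)
| N_tensorI : forall phi psi,
    inN ([[nullary phi]; [nullary psi]], [], Tensor phi psi)
| N_tensorE : forall phi psi chi,
    inN ([[nullary (Tensor phi psi)]; [([phi; psi], chi)]], [], chi)
| N_oneI : inN ([], [], One)
| N_oneE : forall chi, inN ([[nullary One]; [nullary chi]], [], chi)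
| N_withI : forall phi psi,
    inN ([[nullary phi; nullary psi]], [], With phi psi)
| N_withE1 : forall phi psi, inN ([[nullary (With phi psi)]], [], phi)
| N_withE2 : forall phi psi, inN ([[nullary (With phi psi)]], [], psi)
| N_plusI1 : forall phi psi, inN ([[nullary phi]], [], Plus phi psi)
| N_plusI2 : forall phi psi, inN ([[nullary psi]], [], Plus phi psi)
| N_plusE : forall phi psi chi,
    inN ([[nullary (Plus phi psi)]; [([phi], chi); ([psi], chi)]], [], chi)
| N_topI : forall (phis : list form),
    inN (map (fun phi => [nullary phi]) phis, [], Top)
| N_zeroE : forall (phis : list form) chi,
    inN (map (fun phi => [nullary phi]) phis ++ [[nullary Zero]], [], chi)
| N_prom : forall phi, inN ([], [nullary phi], Bang phi)
| N_der : forall phi psi,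
    inN ([[nullary (Bang phi)]; [([phi], psi)]], [], psi)
| N_wk : forall phi psi,
    inN ([[nullary (Bang phi)]; [nullary psi]], [], psi)
| N_ctr : forall phi psi,
    inN ([[nullary (Bang phi)]; [([Bang phi; Bang phi], psi)]], [], psi).

(** In (App), [bs] pairs each box T_i (i <= m) of the
    multiset A (taken up to permutation) with its context Gamma_i, and
    [ex] lists the pairs (Gamma_j, delta_j) for m < j <= n. *)
Inductive star : list form -> form -> Prop :=
| star_ref : forall phi, star [phi] phi
| star_app : forall (A : list box) (Ss : list sequent) (phi : form)
      (bs : list (list form * box)) (ex : list (list form * form))
      (S : list form),
    inN (A, Ss, phi) ->
    Permutation (map snd bs) A ->
    (forall b, In b bs -> forall q, In q (snd b) ->
       star (fst b ++ fst q) (snd q)) ->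
    (forall e, In e ex -> star (fst e) (Bang (snd e))) ->
    (forall q, In q Ss ->
       star (map (fun e => Bang (snd e)) ex ++ fst q) (snd q)) ->
    Permutation S (concat (map fst bs) ++ concat (map fst ex)) ->
    star S phi.

End ILL.

(* Both relations only fix the context of a conclusion up to permutation.
   Every rule of N_ILL is an instance of (App) without promotion premises,
   whence nd is contained in star.  Conversely nd is closed under (App): the
   premises Gamma_j |- !delta_j are discharged by (Wk) for every schema except
   the promotion schema, where they are exactly the premises of (Prom_n). *)

From Stdlib Require Import List Permutation.
Import ListNotations.

Section Equivalence.
Variable atom : Type.
Notation F := (form atom).
Notation boxes := (list (list F * box atom)).

Lemma nd_perm G G' (phi : F) : Permutation G G' -> nd G phi -> nd G' phi.
Proof.
  intros HG H; revert G' HG.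
  induction H; intros G' HG;
    try (econstructor; solve [eauto | rewrite <- HG; eassumption]).
  - apply Permutation_length_1_inv in HG as ->; apply nd_ax.
  - apply Permutation_nil in HG as ->; apply nd_oneI.
Qed.

Lemma star_perm G G' (phi : F) : Permutation G G' -> star G phi -> star G' phi.
Proof.
  intros HG H; revert G' HG.
  destruct H; intros G' HG.
  - apply Permutation_length_1_inv in HG as ->; apply star_ref.
  - eapply star_app; eauto. rewrite <- HG; assumption.
Qed.

(* A sequent [Psi => psi] of a box with context [Gamma] holds when
   [R (Psi ++ Gamma) psi]; putting [Psi] first matches the contexts [phi :: D]
   of the N_ILL rules, while star writes [Gamma ++ Psi]. *)
Definition box_holds (R : list F -> F -> Prop) (b : list F * box atom) : Prop :=
  Forall (fun q => R (fst q ++ fst b) (snd q)) (snd b).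

Lemma Forall_box_holds (R : list F -> F -> Prop) (bs : boxes) :
  (forall G G' phi, Permutation G G' -> R G phi -> R G' phi) ->
  Forall (box_holds R) bs <->
  (forall b, In b bs -> forall q, In q (snd b) -> R (fst b ++ fst q) (snd q)).
Proof.
  intros R_perm; rewrite Forall_forall.
  split; intros Hbs b Hb; [|apply Forall_forall]; intros q Hq;
    [eapply Forall_forall in Hq; [|exact (Hbs b Hb)] | specialize (Hbs b Hb q Hq)];
    (eapply R_perm; [apply Permutation_app_comm | assumption]).
Qed.

Definition nullary_boxes (prems : list (list F * F)) : boxes :=
  map (fun p => (fst p, [nullary (snd p)])) prems.

Lemma map_snd_nullary_boxes prems :
  map snd (nullary_boxes prems) = map (fun phi => [nullary phi]) (map snd prems).
Proof. unfold nullary_boxes; rewrite !map_map; reflexivity. Qed.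

Lemma concat_fst_nullary_boxes prems :
  concat (map fst (nullary_boxes prems)) = concat (map fst prems).
Proof. unfold nullary_boxes; rewrite map_map; reflexivity. Qed.

Lemma Forall_box_holds_nullary_boxes (R : list F -> F -> Prop) prems :
  Forall (box_holds R) (nullary_boxes prems) <->
  (forall p, In p prems -> R (fst p) (snd p)).
Proof.
  unfold nullary_boxes, box_holds; rewrite Forall_map, Forall_forall; simpl.
  split; intros H p Hp; specialize (H p Hp);
    [inversion H; assumption | constructor; auto].
Qed.

Lemma map_snd_eq_nullary (bs : boxes) phis :
  map snd bs = map (fun phi => [nullary phi]) phis ->
  exists prems, bs = nullary_boxes prems.
Proof.
  revert phis; induction bs as [|[G b] bs IH]; intros [|phi phis] H; try discriminate.
  - exists []; reflexivity.
  - injection H as -> H. destruct (IH _ H) as [prems ->].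
    exists ((G, phi) :: prems); reflexivity.
Qed.

Lemma star_schema (bs : boxes) S phi :
  inN (map snd bs, [], phi) -> Forall (box_holds (@star atom)) bs ->
  Permutation S (concat (map fst bs)) -> star S phi.
Proof.
  intros HN Hbs HS.
  apply (star_app bs [] HN (Permutation_refl _)); try easy.
  - apply Forall_box_holds; [exact (@star_perm) | exact Hbs].
  - rewrite app_nil_r; exact HS.
Qed.

Ltac star_by_schema bs :=
  apply (star_schema bs);
  [ simpl; constructor
  | repeat first [apply Forall_nil | apply Forall_cons]; simpl; assumption
  | simpl; rewrite ?app_nil_r; first [assumption | reflexivity] ].

Lemma nd_star G (phi : F) : nd G phi -> star G phi.
Proof.
  induction 1.
  - apply star_ref.
  - star_by_schema [(G, [([phi], psi)])].
  - star_by_schema [(G, [nullary (Lolli phi psi)]); (D, [nullary phi])].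
  - star_by_schema [(G, [nullary phi]); (D, [nullary psi])].
  - star_by_schema [(G, [nullary (Tensor phi psi)]); (D, [([phi; psi], chi)])].
  - star_by_schema (@nil (list F * box atom)).
  - star_by_schema [(G, [nullary (One atom)]); (D, [nullary phi])].
  - star_by_schema [(G, [nullary phi; nullary psi])].
  - star_by_schema [(G, [nullary (With phi psi)])].
  - star_by_schema [(G, [nullary (With phi psi)])].
  - star_by_schema [(G, [nullary phi])].
  - star_by_schema [(G, [nullary psi])].
  - star_by_schema [(G, [nullary (Plus phi psi)]); (D, [([phi], chi); ([psi], chi)])].
  - apply (star_schema (nullary_boxes prems)).
    + rewrite map_snd_nullary_boxes; constructor.
    + apply Forall_box_holds_nullary_boxes; assumption.
    + rewrite concat_fst_nullary_boxes; assumption.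
  - apply (star_schema (nullary_boxes prems ++ [(D, [nullary (Zero atom)])])).
    + rewrite map_app, map_snd_nullary_boxes; constructor.
    + apply Forall_app; split; [apply Forall_box_holds_nullary_boxes; assumption|].
      repeat first [apply Forall_nil | apply Forall_cons]; assumption.
    + rewrite map_app, concat_app, concat_fst_nullary_boxes; simpl; rewrite app_nil_r.
      assumption.
  - apply (star_app [] prems (N_prom phi) (Permutation_refl _)); simpl; try easy.
    intros q [<- | []]; simpl; rewrite app_nil_r; assumption.
  - star_by_schema [(G, [nullary (Bang phi)]); (D, [([phi], psi)])].
  - star_by_schema [(G, [nullary (Bang phi)]); (D, [nullary psi])].
  - star_by_schema [(G, [nullary (Bang phi)]); (D, [([Bang phi; Bang phi], psi)])].
Qed.

Lemma nd_weaken_bangs (ex : list (list F * F)) G phi :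
  (forall e, In e ex -> nd (fst e) (Bang (snd e))) ->
  nd G phi -> nd (G ++ concat (map fst ex)) phi.
Proof.
  induction ex as [|e ex IH]; intros Hex H; simpl.
  - rewrite app_nil_r; exact H.
  - eapply nd_wk.
    + apply Hex; now left.
    + apply IH; [intros e' He'; apply Hex; now right | exact H].
    + rewrite !app_assoc; apply Permutation_app_tail, Permutation_app_comm.
Qed.

Ltac invert_map_snd H :=
  repeat match type of H with
  | map snd _ = _ :: _ =>
      let Hb := fresh in
      apply map_eq_cons in H as ([? ?] & ? & -> & Hb & H); simpl in Hb; subst
  | map snd _ = [] => apply map_eq_nil in H as ->
  end.

Ltac invert_Forall :=
  repeat match goal with
  | H : Forall _ (_ :: _) |- _ => apply Forall_cons_iff in H as [? H]
  | H : Forall _ [] |- _ => clear H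
  | H : box_holds _ _ |- _ => unfold box_holds in H; simpl in H
  end.

Lemma nd_schema A (bs : boxes) phi :
  inN (A, [], phi) -> map snd bs = A -> Forall (box_holds (@nd atom)) bs ->
  nd (concat (map fst bs)) phi.
Proof.
  intros HN <- Hbs; inversion HN; subst; clear HN.
  all: match goal with H : _ = map snd _ |- _ => symmetry in H; rename H into HA end.
  all: try (invert_map_snd HA; invert_Forall; simpl in *; rewrite ?app_nil_r;
            solve [econstructor; eauto]).
  - apply map_snd_eq_nullary in HA as [prems ->].
    eapply nd_topI; [apply Forall_box_holds_nullary_boxes; eassumption|].
    rewrite concat_fst_nullary_boxes; reflexivity.
  - apply map_eq_app in HA as (bs1 & bs2 & -> & Hbs1 & Hbs2).
    apply map_snd_eq_nullary in Hbs1 as [prems ->].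
    apply Forall_app in Hbs as [Hprems Hzero].
    invert_map_snd Hbs2; invert_Forall; simpl in *.
    eapply nd_zeroE; [apply Forall_box_holds_nullary_boxes; eassumption | eassumption |].
    rewrite map_app, concat_app, concat_fst_nullary_boxes; simpl; rewrite app_nil_r.
    reflexivity.
Qed.

Lemma nd_app A Ss (phi : F) (bs : boxes) ex S :
  inN (A, Ss, phi) -> Permutation (map snd bs) A ->
  (forall b, In b bs -> forall q, In q (snd b) -> nd (fst b ++ fst q) (snd q)) ->
  (forall e, In e ex -> nd (fst e) (Bang (snd e))) ->
  (forall q, In q Ss -> nd (map (fun e => Bang (snd e)) ex ++ fst q) (snd q)) ->
  Permutation S (concat (map fst bs) ++ concat (map fst ex)) -> nd S phi.
Proof.
  intros HN HA Hbs Hex HSs HS.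
  apply Forall_box_holds in Hbs; [|exact (@nd_perm)].
  destruct Ss as [|q Ss].
  - symmetry in HA; apply Permutation_map_inv in HA as (bs' & -> & Hbs').
    rewrite Hbs' in Hbs.
    apply (nd_perm (concat (map fst bs') ++ concat (map fst ex))).
    + rewrite HS, <- !flat_map_concat_map, Hbs'; reflexivity.
    + apply nd_weaken_bangs; [exact Hex|].
      exact (nd_schema _ _ _ HN eq_refl Hbs).
  - inversion HN; subst.
    apply Permutation_sym, Permutation_nil, map_eq_nil in HA as ->.
    apply (nd_prom ex); [exact Hex | | exact HS].
    specialize (HSs _ (in_eq _ _)); simpl in HSs.
    rewrite app_nil_r in HSs; exact HSs.
Qed.

Lemma star_nd G (phi : F) : star G phi -> nd G phi.
Proof.
  induction 1; [apply nd_ax | eapply nd_app; eassumption].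
Qed.

End Equivalence.

Theorem theorem3 (atom : Type) (Gamma : list (form atom)) (phi : form atom) :
  nd Gamma phi <-> star Gamma phi.
Proof. split; [apply nd_star | apply star_nd]. Qed.
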